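(* Let $\Omega\subset\mathbb{R}^d$ be compact, let $X_1,\ldots,X_n$ be i.i.d. with density $\varphi_P$ and $Y_1,\ldots,Y_n$ i.i.d. with density $\varphi_D$, independent of the $X_i$. Let $\mathcal{C}=\{C^1,\ldots,C^{|\mathcal{C}|}\}$ be a finite partition of $\Omega$ and $A=[\alpha_{ij}]$ a transportation matrix for $\mathcal{C}$. For each $k$, generate a shadow site $X'_k$ independently as follows: let $C^i$ be the cell containing $Y_k$; sample $J_k=j'$ with probability $\alpha_{ij'}/\varphi_D(C^i)$; then sample $X'_k$ from the density $\varphi_P$ conditioned on $X'_k\in C^{J_k}$. Then the shadow sites $X'_1,\ldots,X'_n$ are (i) jointly independent of $X_1,\ldots,X_n$, and (ii) mutually i.i.d. with density $\varphi_P$.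
   Context: For a cell $C$, $\varphi_P(C)=\int_C\varphi_P$, $\varphi_D(C)=\int_C\varphi_D$. A transportation matrix for $\mathcal{C}$ is a matrix $[\alpha_{ij}]$ with $\alpha_{ij}\ge0$, $\sum_j\alpha_{ij}=\varphi_D(C^i)$ for all $i$ and $\sum_i\alpha_{ij}=\varphi_P(C^j)$ for all $j$. *)

From HB Require Import structures.
From mathcomp Require Import all_boot all_order all_algebra.
From mathcomp Require Import all_classical all_reals all_analysis.
Set Implicit Arguments. Unset Strict Implicit. Unset Printing Implicit Defensive.
Import Order.TTheory GRing.Theory Num.Theory.
Import numFieldNormedType.Exports.
Local Open Scope classical_set_scope.
Local Open Scope ring_scope.

(* R^d is modelled as d.-tuple R with the product (= Borel) sigma-algebra. *)

(* Canonical identification of a tuple with a row vector of 'rV[R]_d,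
   used to speak of compactness in R^d (normed topology on 'rV[R]_d). *)
Definition tuple_to_row (R : realType) (d : nat) (x : d.-tuple R) : 'rV[R]_d :=
  \row_i tnth x i.

Definition compact_Rd (R : realType) (d : nat) (O : set (d.-tuple R)) : Prop :=
  compact (@tuple_to_row R d @` O).

Definition box (R : realType) (d : nat) (a b : d.-tuple R) : set (d.-tuple R) :=
  [set x | forall i : 'I_d, tnth a i <= tnth x i <= tnth b i].

(* mu is Lebesgue measure on R^d: it is the (unique) measure on the Borel sets
   giving each closed box its volume. *)
Definition is_lebesgue_Rd (R : realType) (d : nat)
    (mu : {measure set (d.-tuple R) -> \bar R}) : Prop :=
  forall a b : d.-tuple R, (forall i, tnth a i <= tnth b i) ->
    mu (box a b) = (\prod_(i < d) (tnth b i - tnth a i))%:E.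

Definition density_on (R : realType) (d : nat)
    (mu : {measure set (d.-tuple R) -> \bar R}) (O : set (d.-tuple R))
    (phi : d.-tuple R -> R) : Prop :=
  [/\ measurable_fun setT phi, (forall x, 0 <= phi x),
      (forall x, ~ O x -> phi x = 0),
      mu.-integrable setT (fun x => (phi x)%:E) &
      (\int[mu]_(x in O) (phi x)%:E = 1)%E].

Definition dmass (R : realType) (d : nat)
    (mu : {measure set (d.-tuple R) -> \bar R}) (phi : d.-tuple R -> R)
    (C : set (d.-tuple R)) : R :=
  Rintegral mu C phi.

Definition finite_partition (R : realType) (d m : nat)
    (O : set (d.-tuple R)) (C : 'I_m -> set (d.-tuple R)) : Prop :=
  [/\ (forall i, measurable (C i)),
      (forall i j, i != j -> C i `&` C j = set0) &
      \bigcup_(i in [set: 'I_m]) C i = O].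

Definition transportation_matrix (R : realType) (d m : nat)
    (mu : {measure set (d.-tuple R) -> \bar R}) (phiP phiD : d.-tuple R -> R)
    (C : 'I_m -> set (d.-tuple R)) (alpha : 'M[R]_m) : Prop :=
  [/\ (forall i j, 0 <= alpha i j),
      (forall i, \sum_(j < m) alpha i j = dmass mu phiD (C i)) &
      (forall j, \sum_(i < m) alpha i j = dmass mu phiP (C j))].

(* Probability (law of the shadow-site construction) that Y lies in B and
   the sampled cell index J equals j, and then X' lies in E:
     sum_i (int_{B cap C^i} phi_D) * alpha_{ij}/phi_D(C^i)
       * (int_{E cap C^j} phi_P) / phi_P(C^j).
   (Division by 0 is 0 in MathComp; the corresponding terms have probability 0.) *)
Definition shadow_law (R : realType) (d m : nat)
    (mu : {measure set (d.-tuple R) -> \bar R}) (phiP phiD : d.-tuple R -> R)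
    (C : 'I_m -> set (d.-tuple R)) (alpha : 'M[R]_m)
    (B : set (d.-tuple R)) (j : 'I_m) (E : set (d.-tuple R)) : R :=
  \sum_(i < m) (dmass mu phiD (B `&` C i) * (alpha i j / dmass mu phiD (C i)))
     * (dmass mu phiP (E `&` C j) / dmass mu phiP (C j)).

From HB Require Import structures.
From mathcomp Require Import all_boot all_order all_algebra.
From mathcomp Require Import all_classical all_reals all_analysis.
Import Order.TTheory GRing.Theory Num.Theory.
Import numFieldNormedType.Exports.
Local Open Scope classical_set_scope.
Local Open Scope ring_scope.

(* Summing the joint law over the cell indices J_k, the row sums of the
   transportation matrix cancel the normalisations by phi_D(C^i), and its column
   sums rebuild phi_P(C^j); hence X'_k lands in E with probability
   sum_j phi_P(E cap C^j) = phi_P(E), jointly over k and independently of the X_k.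
   This gives the product law on rectangles, and rectangles form a pi-system
   generating the product sigma-algebra, so uniqueness of measures extends the
   factorisation to all measurable sets. *)

Lemma mulf_divK (F : fieldType) (a b : F) : (a = 0 -> b = 0) -> a * (b / a) = b.
Proof.
have [-> /(_ erefl) ->|a0 _] := eqVneq a 0; first by rewrite mul0r.
by rewrite mulrC divfK.
Qed.

Section density_mass.
Context {R : realType} {d : nat} {mu : {measure set (d.-tuple R) -> \bar R}}
  {O : set (d.-tuple R)} {phi : d.-tuple R -> R}.
Hypothesis phi_density : density_on mu O phi.

Lemma integrable_density D : measurable D -> mu.-integrable D (EFin \o phi).
Proof. by case: phi_density => _ _ _ phi_int _ mD; exact: integrableS phi_int. Qed.

Lemma dmass_ge0 D : 0 <= dmass mu phi D.
Proof. by case: phi_density => _ phi_ge0 _ _ _; exact: Rintegral_ge0. Qed.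

Lemma dmass_setIO D : dmass mu phi (D `&` O) = dmass mu phi D.
Proof.
case: phi_density => _ _ phi_out _ _.
rewrite /dmass Rintegral_mkcond [RHS]Rintegral_mkcond; congr Rintegral.
apply/funext => x; rewrite !patchE.
have [Ox|NOx] := pselect (O x); first by rewrite in_setI (mem_set Ox) andbT.
by rewrite phi_out // !if_same.
Qed.

Lemma dmass_setT : dmass mu phi setT = 1.
Proof.
case: phi_density => _ _ _ _ int_O.
by rewrite -dmass_setIO setTI /dmass /Rintegral int_O.
Qed.

Lemma le_dmass D1 D2 : measurable D1 -> measurable D2 -> D1 `<=` D2 ->
  dmass mu phi D1 <= dmass mu phi D2.
Proof.
move=> mD1 mD2 D12; rewrite /dmass -(setDUK D12) Rintegral_setU //.
- by rewrite lerDl dmass_ge0.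
- exact: measurableD.
- by rewrite setDUK //; exact: integrable_density.
- by rewrite disj_set2E setDIK.
Qed.

Lemma dmass_big_setU (I : eqType) (s : seq I) (F : I -> set (d.-tuple R)) :
  (forall i, measurable (F i)) -> uniq s ->
  (forall i j, i != j -> F i `&` F j = set0) ->
  dmass mu phi (\big[setU/set0]_(i <- s) F i) = \sum_(i <- s) dmass mu phi (F i).
Proof.
move=> mF; elim: s => [_ _|i s IHs /= /andP[is_s uniq_s] disjF].
  by rewrite !big_nil /dmass Rintegral_set0.
have mUs : measurable (\big[setU/set0]_(j <- s) F j) by exact: bigsetU_measurable.
rewrite !big_cons /dmass Rintegral_setU //.
- by rewrite [X in _ + X = _]IHs.
- by apply: integrable_density; exact: measurableU.
rewrite disj_set2E; apply/eqP; rewrite big_distrr /= big_seq big1 // => j js.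
by apply: disjF; apply: contraNneq is_s => ->.
Qed.

End density_mass.

Section shadow_marginal.
Context {R : realType} {d m : nat} {mu : {measure set (d.-tuple R) -> \bar R}}
  {O : set (d.-tuple R)} {phiP phiD : d.-tuple R -> R}
  {C : 'I_m -> set (d.-tuple R)} {alpha : 'M[R]_m}.
Hypothesis phiP_density : density_on mu O phiP.
Hypothesis C_partition : finite_partition O C.
Hypothesis alpha_transport : transportation_matrix mu phiP phiD C alpha.

Lemma shadow_law_setT_sum E : measurable E ->
  \sum_(j < m) shadow_law mu phiP phiD C alpha setT j E = dmass mu phiP E.
Proof.
move=> mE; case: C_partition => mC disjC coverC.
case: alpha_transport => alpha_ge0 row_sum col_sum.
have alpha_rowK i j :
    dmass mu phiD (setT `&` C i) * (alpha i j / dmass mu phiD (C i)) = alpha i j.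
  (* a null cell has a null row, so the junk value x / 0 = 0 is harmless *)
  rewrite setTI; apply: mulf_divK => row0.
  by move: (row_sum i); rewrite row0 => /psumr_eq0P; apply.
have shadow_column j :
    shadow_law mu phiP phiD C alpha setT j E = dmass mu phiP (E `&` C j).
  under [LHS]eq_bigr do rewrite alpha_rowK.
  rewrite -big_distrl /= col_sum; apply: mulf_divK => colj0.
  apply/le_anti; rewrite (dmass_ge0 phiP_density) andbT -colj0.
  by apply: (le_dmass phiP_density) => //; exact: measurableI.
under eq_bigr do rewrite shadow_column.
rewrite -(dmass_big_setU phiP_density) ?index_enum_uniq //; last first.
- by move=> i j ij; rewrite setIACA disjC // setI0.
- by move=> j; exact: measurableI.
rewrite -big_distrr /= -(dmass_setIO phiP_density E) -coverC -bigcup_seq.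
congr (dmass _ _ (_ `&` _)); apply: eq_bigcupl.
by split => j //= _; exact: mem_index_enum.
Qed.

End shadow_marginal.

Lemma measurable_preimage {dT dU} {T : measurableType dT} {U : measurableType dU}
    (f : T -> U) (B : set U) :
  measurable_fun setT f -> measurable B -> measurable (f @^-1` B).
Proof. by move=> mf mB; rewrite -[X in measurable X]setTI; exact: mf. Qed.

Definition rect {U : Type} {n : nat} (A : 'I_n -> set U) : set (n.-tuple U) :=
  [set x | forall k, A k (tnth x k)].

Lemma preimage_rect_mktuple {T U : Type} {n : nat}
    (X : 'I_n -> T -> U) (A : 'I_n -> set U) :
  (fun t => [tuple X k t | k < n]) @^-1` rect A
  = \bigcap_(k in [set: 'I_n]) [set t | A k (X k t)].
Proof.
apply/seteqP; split => t /= At k; last by rewrite tnth_mktuple; exact: At.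
by move=> _; move: (At k); rewrite tnth_mktuple.
Qed.

Section tuple_rectangles.
Context {dU : measure_display} {U : measurableType dU} {n : nat}.

Definition measurable_rects : set (set (n.-tuple U)) :=
  [set S | exists2 A : 'I_n -> set U, (forall k, measurable (A k)) & S = rect A].

Lemma rect_bigcap (A : 'I_n -> set U) :
  rect A = \bigcap_(k in [set: 'I_n]) (@tnth n U ^~ k) @^-1` A k.
Proof. by apply/seteqP; split => x Ax k; [move=> _ | ]; exact: Ax. Qed.

Lemma measurable_rect (A : 'I_n -> set U) :
  (forall k, measurable (A k)) -> measurable (rect A).
Proof.
move=> mA; rewrite rect_bigcap; apply: fin_bigcap_measurable => // k _.
by apply: measurable_preimage => //; exact: measurable_tnth.
Qed.

Lemma measurable_rects_generate : measurable = <<s measurable_rects >>.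
Proof.
apply/seteqP; split; last first.
  apply: smallest_sub; first exact: sigma_algebra_measurable.
  by move=> _ [A mA ->]; exact: measurable_rect.
apply: smallest_sub; first exact: smallest_sigma_algebra.
move=> S; rewrite -bigcup_seq => -[i _ [B mB <-]]; apply: sub_sigma_algebra.
exists (fun k => if k == i then B else setT); first by move=> k; case: ifP.
apply/seteqP; split => x /=; last by move=> /(_ i); rewrite eqxx.
by move=> [_ Bx] k; case: eqP => [->|].
Qed.

Lemma rectT : rect (fun=> setT) = [set: n.-tuple U].
Proof. by apply/seteqP; split. Qed.

Lemma measurable_rects_setI : setI_closed measurable_rects.
Proof.
move=> _ _ [A mA ->] [B mB ->]; exists (fun k => A k `&` B k).
  by move=> k; exact: measurableI.
apply/seteqP; split => x /=; first by move=> [Ax Bx] k.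
by move=> ABx; split => k; case: (ABx k).
Qed.

Lemma measure_unique_rect {R : realType} (m1 m2 : {measure set (n.-tuple U) -> \bar R}) :
  (m1 setT < +oo)%E ->
  (forall A, (forall k, measurable (A k)) -> m1 (rect A) = m2 (rect A)) ->
  forall S, measurable S -> m1 S = m2 S.
Proof.
move=> m1_fin m12 S mS.
apply: (measure_unique measurable_rects (fun=> setT)) => //.
- exact: measurable_rects_generate.
- exact: measurable_rects_setI.
- by move=> _; exists (fun=> setT) => //; apply/seteqP; split.
- by rewrite bigcup_const.
- by move=> _ [A mA ->]; exact: m12.
Qed.

End tuple_rectangles.

Lemma measurable_mktuple {dT dU} {T : measurableType dT} {U : measurableType dU} {n : nat}
    (X : 'I_n -> T -> U) :
  (forall k, measurable_fun setT (X k)) ->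
  measurable_fun setT (fun t => [tuple X k t | k < n]).
Proof.
move=> mX; apply/measurable_fun_tnthP => k.
by rewrite (_ : _ \o _ = X k) //; apply/funext => t /=; rewrite tnth_mktuple.
Qed.

Section independence_on_rects.
Context {dT : measure_display} {T : measurableType dT} {R : realType}
  (P : probability T R).
Local Open Scope ereal_scope.

Lemma prob_setI_preimage_rect {dU} {U : measurableType dU} {n : nat}
    (D : set T) (g : T -> n.-tuple U) :
  measurable D -> measurable_fun setT g ->
  (forall E, (forall k, measurable (E k)) ->
    P (D `&` g @^-1` rect E) = P D * P (g @^-1` rect E)) ->
  forall S, measurable S -> P (D `&` g @^-1` S) = P D * P (g @^-1` S).
Proof.
move=> mD mg DgE S mS.
have PD_fin : P D \is a fin_num by rewrite fin_num_measure.
pose c := NngNum (fine_ge0 (measure_ge0 P D)).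
(* both sides are finite measures in S: P restricted to D, and P scaled by P D *)
suff : pushforward (mrestr P mD) g S = pushforward (mscale c P) g S.
  by rewrite /pushforward /mrestr /mscale /= fineK // setIC.
apply: measure_unique_rect => // [|E mE].
  rewrite /pushforward /mrestr (le_lt_trans (probability_le1 _ _)) ?ltry //.
  by apply: measurableI => //; exact: measurable_preimage.
rewrite -[LHS]/(P (g @^-1` rect E `&` D)) -[RHS]/(c%:num%:E * P (g @^-1` rect E)).
by rewrite /= fineK // setIC DgE.
Qed.

Lemma independent_preimage_rect {dU1 dU2} {U1 : measurableType dU1}
    {U2 : measurableType dU2} {n1 n2 : nat}
    (f : T -> n1.-tuple U1) (g : T -> n2.-tuple U2) :
  measurable_fun setT f -> measurable_fun setT g ->
  (forall A E, (forall k, measurable (A k)) -> (forall k, measurable (E k)) ->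
    P (f @^-1` rect A `&` g @^-1` rect E) = P (f @^-1` rect A) * P (g @^-1` rect E)) ->
  forall S S', measurable S -> measurable S' ->
    P (f @^-1` S `&` g @^-1` S') = P (f @^-1` S) * P (g @^-1` S').
Proof.
move=> mf mg fg_rect S S' mS mS'.
rewrite setIC muleC; apply: prob_setI_preimage_rect => // [|A mA].
  exact: measurable_preimage.
rewrite setIC muleC; apply: prob_setI_preimage_rect => // [|E].
  by apply: measurable_preimage => //; exact: measurable_rect.
exact: fg_rect.
Qed.

End independence_on_rects.

Lemma prob_sum_ffun_values {dT} {T : measurableType dT} {R : realType}
    (P : probability T R) {I K : finType} (J : I -> T -> K) (G : set T) :
  measurable G -> (forall i k, measurable [set t | J i t = k]) ->
  P G = (\sum_(f : {ffun I -> K})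
           P (G `&` \bigcap_(i in [set: I]) [set t | J i t = f i]))%E.
Proof.
move=> mG mJ.
pose F (f : {ffun I -> K}) := G `&` \bigcap_(i in [set: I]) [set t | J i t = f i].
rewrite [in LHS](_ : G = \bigcup_(f in [set: {ffun I -> K}]) F f); last first.
  apply/seteqP; split => [t Gt|t [f _ []] //].
  by exists [ffun i => J i t] => //; split => // i _; rewrite ffunE.
rewrite measure_fin_bigcup //; [|exact: finite_finset| |].
- rewrite (fsbigE (index_enum _)) ?index_enum_uniq // => [|f _]; last first.
    by rewrite mem_index_enum.
  by rewrite big_mkcond; apply: eq_bigr => f _; rewrite in_setT.
- apply/trivIsetP => f g _ _; apply: contraNeq => /set0P[t [[_ Jf] [_ Jg]]].
  by apply/eqP/ffunP => i; rewrite -(Jf i) // -(Jg i).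
- move=> f _; apply: measurableI => //.
  by apply: fin_bigcap_measurable => // i _; exact: mJ.
Qed.

Section shadow_experiment.
Context {R : realType} {d n m : nat} {mu : {measure set (d.-tuple R) -> \bar R}}
  {O : set (d.-tuple R)} {phiP phiD : d.-tuple R -> R}
  {C : 'I_m -> set (d.-tuple R)} {alpha : 'M[R]_m}
  {dT : measure_display} {T : measurableType dT} {P : probability T R}
  {X Y X' : 'I_n -> T -> d.-tuple R} {J : 'I_n -> T -> 'I_m}.
Hypothesis phiP_density : density_on mu O phiP.
Hypothesis C_partition : finite_partition O C.
Hypothesis alpha_transport : transportation_matrix mu phiP phiD C alpha.
Hypothesis mX : forall k, measurable_fun setT (X k).
Hypothesis mX' : forall k, measurable_fun setT (X' k).
Hypothesis mJ : forall k (j : 'I_m), measurable [set t | J k t = j].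
Hypothesis joint_law : forall (A B E : 'I_n -> set (d.-tuple R)) (j : 'I_n -> 'I_m),
  (forall k, measurable (A k)) -> (forall k, measurable (B k)) ->
  (forall k, measurable (E k)) ->
  P (\bigcap_(k in [set: 'I_n])
       ([set t | A k (X k t)] `&` [set t | B k (Y k t)]
        `&` [set t | J k t = j k] `&` [set t | E k (X' k t)]))
  = ((\prod_(k < n) dmass mu phiP (A k))
     * \prod_(k < n) shadow_law mu phiP phiD C alpha (B k) (j k) (E k))%:E.

Local Notation Xs := (fun t => [tuple X k t | k < n]).
Local Notation X's := (fun t => [tuple X' k t | k < n]).

Lemma prob_rect_X_X' (A E : 'I_n -> set (d.-tuple R)) :
  (forall k, measurable (A k)) -> (forall k, measurable (E k)) ->
  P (Xs @^-1` rect A `&` X's @^-1` rect E)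
  = ((\prod_(k < n) dmass mu phiP (A k)) * \prod_(k < n) dmass mu phiP (E k))%:E.
Proof.
move=> mA mE.
have mXs : measurable_fun setT Xs by exact: measurable_mktuple.
have mX's : measurable_fun setT X's by exact: measurable_mktuple.
rewrite (prob_sum_ffun_values P J) //; last first.
  by apply: measurableI; apply: measurable_preimage => //; exact: measurable_rect.
transitivity (\sum_(j : {ffun 'I_n -> 'I_m}) ((\prod_(k < n) dmass mu phiP (A k))
    * \prod_(k < n) shadow_law mu phiP phiD C alpha setT (j k) (E k))%:E).
  apply: eq_bigr => j _; rewrite -(joint_law A (fun=> setT) E j) //; congr (P _).
  rewrite !preimage_rect_mktuple; apply/seteqP; split => t /=.
    by move=> [[At Et] Jt] k _; have := At k I; have := Et k I; have := Jt k I.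
  by move=> h; do ![split] => k _; have [[[? ?] ?] ?] := h k I.
rewrite sumEFin -big_distrr /=; congr (_ * _)%:E.
under [RHS]eq_bigr => k _
  do rewrite -(shadow_law_setT_sum phiP_density C_partition alpha_transport _ (mE k)).
by rewrite bigA_distr_bigA.
Qed.

Lemma prob_rect_X (A : 'I_n -> set (d.-tuple R)) : (forall k, measurable (A k)) ->
  P (Xs @^-1` rect A) = (\prod_(k < n) dmass mu phiP (A k))%:E.
Proof.
move=> mA; have := @prob_rect_X_X' A (fun=> setT) mA (fun=> measurableT).
rewrite rectT preimage_setT setIT => ->.
by rewrite [X in _ * X]big1 ?mulr1 // => k _; exact: (dmass_setT phiP_density).
Qed.

Lemma prob_rect_X' (E : 'I_n -> set (d.-tuple R)) : (forall k, measurable (E k)) ->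
  P (X's @^-1` rect E) = (\prod_(k < n) dmass mu phiP (E k))%:E.
Proof.
move=> mE; have := @prob_rect_X_X' (fun=> setT) E (fun=> measurableT) mE.
rewrite rectT preimage_setT setTI => ->.
by rewrite big1 ?mul1r // => k _; exact: (dmass_setT phiP_density).
Qed.

Lemma independent_X_X' (S S' : set (n.-tuple (d.-tuple R))) :
  measurable S -> measurable S' ->
  P (Xs @^-1` S `&` X's @^-1` S') = (P (Xs @^-1` S) * P (X's @^-1` S'))%E.
Proof.
apply: independent_preimage_rect; [exact: measurable_mktuple..|] => A E mA mE.
by rewrite prob_rect_X_X' // prob_rect_X // prob_rect_X' // EFinM.
Qed.

Lemma prob_X' k (E : set (d.-tuple R)) :
  measurable E -> P [set t | E (X' k t)] = (dmass mu phiP E)%:E.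
Proof.
move=> mE.
have -> : [set t | E (X' k t)] = X's @^-1` rect (fun l => if l == k then E else setT).
  apply/seteqP; split => t /=; last by move=> /(_ k); rewrite tnth_mktuple eqxx.
  by move=> Et l; rewrite tnth_mktuple; case: eqP => [->|].
rewrite prob_rect_X' => [|l]; last by case: ifP.
rewrite (bigD1 k) //= eqxx big1 ?mulr1 // => l /negPf ->.
exact: (dmass_setT phiP_density).
Qed.

Lemma independent_X' (E : 'I_n -> set (d.-tuple R)) : (forall k, measurable (E k)) ->
  P (\bigcap_(k in [set: 'I_n]) [set t | E k (X' k t)])
  = (\prod_(k < n) P [set t | E k (X' k t)])%E.
Proof.
move=> mE; rewrite -preimage_rect_mktuple prob_rect_X' // -prodEFin.
by apply: eq_bigr => k _; rewrite prob_X'.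
Qed.

End shadow_experiment.

Theorem lemma6 (R : realType) (d n m : nat)
  (mu : {measure set (d.-tuple R) -> \bar R})
  (Omega : set (d.-tuple R))
  (phiP phiD : d.-tuple R -> R)
  (C : 'I_m -> set (d.-tuple R)) (alpha : 'M[R]_m)
  (dT : measure_display) (T : measurableType dT) (P : probability T R)
  (X Y X' : 'I_n -> T -> d.-tuple R) (J : 'I_n -> T -> 'I_m) :
  is_lebesgue_Rd mu ->
  measurable Omega -> compact_Rd Omega ->
  density_on mu Omega phiP -> density_on mu Omega phiD ->
  finite_partition Omega C ->
  transportation_matrix mu phiP phiD C alpha ->
  (forall k, measurable_fun setT (X k)) ->
  (forall k, measurable_fun setT (Y k)) ->
  (forall k, measurable_fun setT (X' k)) ->
  (forall k (j : 'I_m), measurable [set t | J k t = j]) ->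
  (forall (A B E : 'I_n -> set (d.-tuple R)) (j : 'I_n -> 'I_m),
     (forall k, measurable (A k)) -> (forall k, measurable (B k)) ->
     (forall k, measurable (E k)) ->
     P (\bigcap_(k in [set: 'I_n])
          ([set t | A k (X k t)] `&` [set t | B k (Y k t)]
           `&` [set t | J k t = j k] `&` [set t | E k (X' k t)]))
     = ((\prod_(k < n) dmass mu phiP (A k))
        * \prod_(k < n) shadow_law mu phiP phiD C alpha (B k) (j k) (E k))%:E) ->
  (forall S S' : set (n.-tuple (d.-tuple R)), measurable S -> measurable S' ->
     P ([set t | S [tuple X k t | k < n]] `&` [set t | S' [tuple X' k t | k < n]])
     = (P [set t | S [tuple X k t | k < n]] * P [set t | S' [tuple X' k t | k < n]])%E)
  /\
  ((forall k (E : set (d.-tuple R)), measurable E ->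
      P [set t | E (X' k t)] = (dmass mu phiP E)%:E) /\
   (forall E : 'I_n -> set (d.-tuple R), (forall k, measurable (E k)) ->
      P (\bigcap_(k in [set: 'I_n]) [set t | E k (X' k t)])
      = (\prod_(k < n) P [set t | E k (X' k t)])%E)).
Proof.
move=> _ _ _ hP _ hC hA mX _ mX' mJ law.
split; first exact: (independent_X_X' hP hC hA mX mX' mJ law).
split; first exact: (prob_X' hP hC hA mX mX' mJ law).
exact: (independent_X' hP hC hA mX mX' mJ law).
Qed.
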